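(* Suppose $b=0$ and $\alpha(a\alpha+b\beta)\neq0$, i.e. $\alpha\neq0$ and $a\neq0$. Then the only control set of $\Sigma$ is the whole group $G$.
   Context: Let $G=\{(x,y)\in\mathbb{R}^2:x>0\}$. Fix $\Omega=[u_*,u^*]$ with $u_*<0<u^*$. The admissible controls $\mathcal U$ are the piecewise constant functions $\mathbb{R}\to\Omega$. The system is $\Sigma$: $\dot x=u\alpha x$, $\dot y=a(x-1)+by+ux\beta$, with $(a,b),(\alpha,\beta)\in\mathbb{R}^2\setminus\{(0,0)\}$. We write $\varphi(t,p,u)$ for its solutions and $\mathcal O^+(p)=\{\varphi(t,p,u):t\ge0,u\in\mathcal U\}$; closures are taken in $G$. A control set is a subset $\mathcal C\subset G$ that is maximal with respect to inclusion among the sets satisfying both of the following: (i) every $p\in\mathcal C$ admits $u\in\mathcal U$ with $\varphi(t,p,u)\in\mathcal C$ for all $t\ge0$; (ii) $\mathcal C\subset\operatorname{cl}\mathcal O^+(p)$ for all $p\in\mathcal C$. *)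

From Stdlib Require Import Reals Lra List.
Open Scope R_scope.

Definition pt := (R * R)%type.
Definition inG (p : pt) : Prop := 0 < fst p.

Definition fx (alpha v : R) (p : pt) : R := v * alpha * fst p.
Definition fy (a b beta v : R) (p : pt) : R :=
  a * (fst p - 1) + b * snd p + v * fst p * beta.

Definition loc_const (u : R -> R) (t : R) : Prop :=
  exists d, 0 < d /\ forall s, Rabs (s - t) < d -> u s = u t.

(* Admissible controls: piecewise constant functions R -> [umin, umax]:
   on every compact interval, u is locally constant except at finitely many
   points (the switching times). *)
Definition admissible (umin umax : R) (u : R -> R) : Prop :=
  (forall t, umin <= u t <= umax) /\
  (forall T0 T1, exists L : list R,
     forall t, T0 <= t <= T1 -> ~ In t L -> loc_const u t).

(* gam is the solution phi(., p, u) of Sigma: continuous, starting at p,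
   and satisfying the ODE at every point where u is locally constant
   (i.e. away from the switching times). For piecewise constant u this
   determines the solution uniquely (the system is affine). *)
Definition is_traj (a b alpha beta : R) (u : R -> R) (p : pt) (gam : R -> pt)
  : Prop :=
  gam 0 = p /\
  (forall t, continuity_pt (fun s => fst (gam s)) t /\
             continuity_pt (fun s => snd (gam s)) t) /\
  (forall t, loc_const u t ->
     derivable_pt_lim (fun s => fst (gam s)) t (fx alpha (u t) (gam t)) /\
     derivable_pt_lim (fun s => snd (gam s)) t (fy a b beta (u t) (gam t))).

Definition orbit_plus (a b alpha beta umin umax : R) (p : pt) (q : pt) : Prop :=
  exists u gam t, admissible umin umax u /\ is_traj a b alpha beta u p gam /\
    0 <= t /\ gam t = q.

Definition closG (S : pt -> Prop) (q : pt) : Prop :=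
  inG q /\ forall eps, 0 < eps -> exists r, S r /\
    Rabs (fst r - fst q) < eps /\ Rabs (snd r - snd q) < eps.

Definition ctrl_cond (a b alpha beta umin umax : R) (C : pt -> Prop) : Prop :=
  (forall p, C p -> inG p) /\
  (forall p, C p -> exists u gam, admissible umin umax u /\
       is_traj a b alpha beta u p gam /\ forall t, 0 <= t -> C (gam t)) /\
  (forall p, C p -> forall q, C q ->
       closG (orbit_plus a b alpha beta umin umax p) q).

Definition control_set (a b alpha beta umin umax : R) (C : pt -> Prop) : Prop :=
  ctrl_cond a b alpha beta umin umax C /\
  forall D : pt -> Prop, ctrl_cond a b alpha beta umin umax D ->
    (forall p, C p -> D p) -> forall p, D p -> C p.

(* With b = 0 the system commutes with translations in y.  The control 0 freezes x while
   y drifts with speed a (x - 1), whose sign is that of x - 1, and controls v with v alpha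
   of either sign steer x exponentially up or down.  So from (x0, y0) one steers x above 1,
   rests, steers x below 1, rests, and steers x to x1; as the two drift speeds have opposite
   signs, the two resting times can be chosen positive to produce any change in y.  Hence
   every point of G is reachable from every other, so G satisfies the control-set conditions
   and contains every set that does. *)

From Stdlib Require Import Reals Lra List.
From Coquelicot Require Import Coquelicot.
Import ListNotations.
Open Scope R_scope.

Definition exp_integral (k t : R) : R :=
  if Req_EM_T k 0 then t else (exp (k * t) - 1) / k.

Lemma exp_integral_derive k t :
  derivable_pt_lim (exp_integral k) t (exp (k * t)).
Proof.
  unfold exp_integral; destruct (Req_EM_T k 0) as [->|Hk].
  - rewrite Rmult_0_l, exp_0. apply derivable_pt_lim_id.
  - apply is_derive_Reals. auto_derive; auto. field; auto.
Qed.

Lemma exp_integral_at_0 k : exp_integral k 0 = 0.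
Proof.
  unfold exp_integral; destruct (Req_EM_T k 0); [lra|].
  rewrite Rmult_0_r, exp_0. field; auto.
Qed.

Lemma exp_integral_rate_0 t : exp_integral 0 t = t.
Proof. unfold exp_integral; destruct (Req_EM_T 0 0); [reflexivity|lra]. Qed.

Lemma exp_mul_ln_div k x c : 0 < x -> 0 < c -> k <> 0 ->
  x * exp (k * ((ln c - ln x) / k)) = c.
Proof.
  intros Hx Hc Hk. replace (k * ((ln c - ln x) / k)) with (ln c + - ln x) by (field; auto).
  rewrite exp_plus, exp_Ropp, !exp_ln by auto. field; lra.
Qed.

Lemma positive_combination A1 A2 r : A1 * A2 < 0 ->
  exists T1 T2, 0 < T1 /\ 0 < T2 /\ A1 * T1 + A2 * T2 = r.
Proof.
  intros H. assert (H1 := Rle_abs r). assert (H2 := Rle_abs (- r)). rewrite Rabs_Ropp in H2.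
  destruct (Rtotal_order A1 0) as [Hn|[Hz|Hp]].
  - assert (0 < A2) by nra.
    exists ((r - Rabs r - 1) / A1), ((Rabs r + 1) / A2). repeat split.
    + apply Rdiv_neg_neg; lra.
    + apply Rdiv_lt_0_compat; lra.
    + field; lra.
  - subst; lra.
  - assert (A2 < 0) by nra.
    exists ((r + Rabs r + 1) / A1), ((Rabs r + 1) / (- A2)). repeat split.
    + apply Rdiv_lt_0_compat; lra.
    + apply Rdiv_lt_0_compat; lra.
    + field; lra.
Qed.

Lemma derivable_pt_lim_local f g t l d : 0 < d ->
  (forall s, Rabs (s - t) < d -> f s = g s) ->
  derivable_pt_lim g t l -> derivable_pt_lim f t l.
Proof.
  intros Hd Heq Hg eps Heps. destruct (Hg eps Heps) as [del Hdel].
  assert (Hm : 0 < Rmin del d) by (apply Rmin_pos; [apply cond_pos|lra]).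
  exists (mkposreal _ Hm). intros h Hh Hhd. simpl in Hhd.
  rewrite (Heq (t + h)), (Heq t).
  - apply Hdel; auto. apply Rlt_le_trans with (1 := Hhd). apply Rmin_l.
  - rewrite Rminus_diag, Rabs_R0. lra.
  - replace (t + h - t) with h by ring. apply Rlt_le_trans with (1 := Hhd). apply Rmin_r.
Qed.

Lemma derivable_pt_lim_shift g t T l : derivable_pt_lim g (t - T) l ->
  derivable_pt_lim (fun s => g (s - T)) t l.
Proof.
  intros H eps Heps. destruct (H eps Heps) as [del Hdel]. exists del.
  intros h Hh Hhd. replace (t + h - T) with (t - T + h) by ring. apply Hdel; auto.
Qed.

Lemma continuity_pt_1_lipschitz f t :
  (forall s, Rabs (f s - f t) <= Rabs (s - t)) -> continuity_pt f t.
Proof.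
  intros H. apply continuity_pt_locally. intros eps. exists eps. intros y Hy.
  apply Rle_lt_trans with (1 := H y). exact Hy.
Qed.

Lemma continuity_pt_Rmin_l T t : continuity_pt (fun s => Rmin s T) t.
Proof.
  apply continuity_pt_1_lipschitz. intros s. unfold Rmin.
  destruct (Rle_dec s T), (Rle_dec t T); unfold Rabs; repeat destruct Rcase_abs; lra.
Qed.

Lemma continuity_pt_Rmax_l T t : continuity_pt (fun s => Rmax s T) t.
Proof.
  apply continuity_pt_1_lipschitz. intros s. unfold Rmax.
  destruct (Rle_dec s T), (Rle_dec t T); unfold Rabs; repeat destruct Rcase_abs; lra.
Qed.

Section Concatenation.
Variables a b alpha beta : R.

Definition concat_ctrl (v T : R) (u : R -> R) (t : R) : R :=
  if Rlt_dec t T then v else u (t - T).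

(* Glue [S] on [(-oo, T]] to the shifted [gam] on [[T, +oo)]; written with [Rmin]/[Rmax]
   so that continuity is inherited for free, the two pieces agreeing at [T] when
   [gam 0 = S T]. *)
Definition concat_path (S gam : R -> pt) (T t : R) : pt :=
  (fst (S (Rmin t T)) + fst (gam (Rmax t T - T)) - fst (S T),
   snd (S (Rmin t T)) + snd (gam (Rmax t T - T)) - snd (S T)).

Lemma concat_ctrl_before v T u t : t < T -> concat_ctrl v T u t = v.
Proof. intros; unfold concat_ctrl; destruct (Rlt_dec t T); lra. Qed.

Lemma concat_ctrl_after v T u t : T <= t -> concat_ctrl v T u t = u (t - T).
Proof. intros; unfold concat_ctrl; destruct (Rlt_dec t T); [lra|reflexivity]. Qed.

Lemma concat_path_before S gam T t : gam 0 = S T -> t <= T ->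
  concat_path S gam T t = S t.
Proof.
  intros H0 Ht. unfold concat_path. rewrite Rmin_left, Rmax_right by lra.
  rewrite Rminus_diag, H0. destruct (S t); simpl; f_equal; ring.
Qed.

Lemma concat_path_after S gam T t : T <= t ->
  concat_path S gam T t = gam (t - T).
Proof.
  intros Ht. unfold concat_path. rewrite Rmin_right, Rmax_left by lra.
  destruct (gam (t - T)); simpl; f_equal; ring.
Qed.

Lemma continuity_pt_concat (A B : R -> R) T c t :
  (forall s, continuity_pt A s) -> (forall s, continuity_pt B s) ->
  continuity_pt (fun s => A (Rmin s T) + B (Rmax s T - T) - c) t.
Proof.
  intros HA HB.
  apply (continuity_pt_minus (fun s => A (Rmin s T) + B (Rmax s T - T)) (fun _ => c)).
  - apply (continuity_pt_plus (fun s => A (Rmin s T)) (fun s => B (Rmax s T - T))).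
    + apply (continuity_pt_comp (fun s => Rmin s T)); [apply continuity_pt_Rmin_l|apply HA].
    + apply (continuity_pt_comp (fun s => Rmax s T - T)); [|apply HB].
      apply (continuity_pt_minus (fun s => Rmax s T) (fun _ => T));
        [apply continuity_pt_Rmax_l|apply continuity_pt_const; intros ? ?; reflexivity].
  - apply continuity_pt_const. intros ? ?; reflexivity.
Qed.

Lemma not_loc_const_concat_at_switch v T u : u 0 <> v -> ~ loc_const (concat_ctrl v T u) T.
Proof.
  intros Hne [d [Hd Hdd]].
  assert (E : concat_ctrl v T u (T - d / 2) = concat_ctrl v T u T).
  { apply Hdd. replace (T - d / 2 - T) with (- (d / 2)) by ring.
    rewrite Rabs_Ropp, Rabs_right; lra. }
  rewrite concat_ctrl_before, concat_ctrl_after in E by lra.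
  rewrite Rminus_diag in E. auto.
Qed.

Lemma loc_const_concat_after v T u t : T < t ->
  loc_const (concat_ctrl v T u) t -> loc_const u (t - T).
Proof.
  intros Ht [d [Hd Hdd]]. exists (Rmin d (t - T)). split; [apply Rmin_pos; lra|].
  intros s Hs. apply Rabs_def2 in Hs.
  assert (Hm1 := Rmin_l d (t - T)). assert (Hm2 := Rmin_r d (t - T)).
  rewrite <- (concat_ctrl_after v T u t), <- (Hdd (s + T)) by (try apply Rabs_def1; lra).
  rewrite concat_ctrl_after by lra. f_equal; ring.
Qed.

Lemma loc_const_const v t : loc_const (fun _ => v) t.
Proof. exists 1. split; [lra|reflexivity]. Qed.

(* [u 0 <> v] makes [T] a genuine switching time, at which [is_traj] asks for no derivative. *)
Lemma concat_traj v T u p S gam :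
  0 < T -> u 0 <> v ->
  is_traj a b alpha beta (fun _ => v) p S ->
  is_traj a b alpha beta u (S T) gam ->
  is_traj a b alpha beta (concat_ctrl v T u) p (concat_path S gam T).
Proof.
  intros HT Hne [HS0 [HSc HSd]] [Hg0 [Hgc Hgd]]. split; [|split].
  - rewrite concat_path_before by (exact Hg0 || lra). exact HS0.
  - intros t; split; unfold concat_path.
    + apply (continuity_pt_concat (fun s => fst (S s)) (fun s => fst (gam s)));
        intros s; [apply HSc | apply Hgc].
    + apply (continuity_pt_concat (fun s => snd (S s)) (fun s => snd (gam s)));
        intros s; [apply HSc | apply Hgc].
  - intros t Hlc. destruct (Rtotal_order t T) as [Hlt|[Heq|Hgt]].
    + assert (Heq : forall s, Rabs (s - t) < T - t -> concat_path S gam T s = S s).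
      { intros s Hs. apply Rabs_def2 in Hs. apply concat_path_before; [exact Hg0|lra]. }
      rewrite concat_ctrl_before, Heq by (try (rewrite Rminus_diag, Rabs_R0); lra).
      destruct (HSd t (loc_const_const v t)) as [Dx Dy]. split.
      * apply (derivable_pt_lim_local _ (fun s => fst (S s)) _ _ (T - t)); [lra| |exact Dx].
        intros s Hs. rewrite Heq; auto.
      * apply (derivable_pt_lim_local _ (fun s => snd (S s)) _ _ (T - t)); [lra| |exact Dy].
        intros s Hs. rewrite Heq; auto.
    + subst t. exfalso. exact (not_loc_const_concat_at_switch v T u Hne Hlc).
    + assert (Heq : forall s, Rabs (s - t) < t - T -> concat_path S gam T s = gam (s - T)).
      { intros s Hs. apply Rabs_def2 in Hs. apply concat_path_after; lra. }
      destruct (Hgd _ (loc_const_concat_after v T u t Hgt Hlc)) as [Dx Dy].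
      rewrite concat_ctrl_after, Heq by (try (rewrite Rminus_diag, Rabs_R0); lra). split.
      * apply (derivable_pt_lim_local _ (fun s => fst (gam (s - T))) _ _ (t - T)); [lra| |].
        -- intros s Hs. rewrite Heq; auto.
        -- apply (derivable_pt_lim_shift (fun s => fst (gam s))). exact Dx.
      * apply (derivable_pt_lim_local _ (fun s => snd (gam (s - T))) _ _ (t - T)); [lra| |].
        -- intros s Hs. rewrite Heq; auto.
        -- apply (derivable_pt_lim_shift (fun s => snd (gam s))). exact Dy.
Qed.

End Concatenation.

Lemma const_admissible umin umax v : umin <= v <= umax -> admissible umin umax (fun _ => v).
Proof.
  intros Hv. split; [auto|]. intros T0 T1. exists nil. intros t _ _. apply loc_const_const.
Qed.

Lemma concat_admissible umin umax v T u : umin <= v <= umax -> admissible umin umax u ->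
  admissible umin umax (concat_ctrl v T u).
Proof.
  intros Hv [Hb Hl]. split.
  - intros t; unfold concat_ctrl; destruct (Rlt_dec t T); auto.
  - intros T0 T1. destruct (Hl (T0 - T) (T1 - T)) as [L HL].
    exists (T :: map (fun s => s + T) L). intros t Ht Hn.
    destruct (Rtotal_order t T) as [Hlt|[Heq|Hgt]].
    + exists (T - t). split; [lra|]. intros s Hs. apply Rabs_def2 in Hs.
      rewrite !concat_ctrl_before by lra. reflexivity.
    + exfalso; apply Hn; left; auto.
    + assert (HnL : ~ In (t - T) L).
      { intros Hi. apply Hn. right. replace t with ((t - T) + T) by ring.
        apply (in_map (fun s => s + T)); auto. }
      destruct (HL (t - T) ltac:(lra) HnL) as [d [Hd Hdd]].
      exists (Rmin d (t - T)). split; [apply Rmin_pos; lra|].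
      intros s Hs. apply Rabs_def2 in Hs.
      assert (Hm1 := Rmin_l d (t - T)). assert (Hm2 := Rmin_r d (t - T)).
      rewrite !concat_ctrl_after by lra. apply Hdd. apply Rabs_def1; lra.
Qed.

Section ConstantControl.
Variables a alpha beta : R.

Definition const_flow (v : R) (p : pt) (t : R) : pt :=
  (fst p * exp (v * alpha * t),
   snd p + (a + v * beta) * fst p * exp_integral (v * alpha) t - a * t).

Lemma const_flow_at_0 v p : const_flow v p 0 = p.
Proof.
  destruct p as [x y]. unfold const_flow; simpl.
  rewrite exp_integral_at_0, Rmult_0_r, exp_0. f_equal; ring.
Qed.

Lemma const_flow_traj v p : is_traj a 0 alpha beta (fun _ => v) p (const_flow v p).
Proof.
  assert (Dx : forall t, derivable_pt_lim (fun s => fst (const_flow v p s)) t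
                           (fx alpha v (const_flow v p t))).
  { intros t. unfold const_flow, fx; simpl. apply is_derive_Reals. auto_derive; auto. ring. }
  assert (Dy : forall t, derivable_pt_lim (fun s => snd (const_flow v p s)) t
                           (fy a 0 beta v (const_flow v p t))).
  { intros t. unfold const_flow, fy; simpl.
    assert (H := exp_integral_derive (v * alpha) t). apply is_derive_Reals in H.
    apply is_derive_Reals. auto_derive.
    - eexists; exact H.
    - replace (Derive (fun s => exp_integral (v * alpha) s) t) with (exp (v * alpha * t))
        by (symmetry; apply is_derive_unique; exact H).
      ring. }
  split; [apply const_flow_at_0|split].
  - intros t; split; apply derivable_continuous_pt; eexists; [apply Dx|apply Dy].
  - intros t _; split; [apply Dx|apply Dy].
Qed.

Lemma const_flow_rest x y t : const_flow 0 (x, y) t = (x, y + a * (x - 1) * t).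
Proof.
  unfold const_flow; simpl. rewrite !Rmult_0_l, exp_integral_rate_0, exp_0. f_equal; ring.
Qed.

Lemma const_flow_translate v x y d t :
  const_flow v (x, y + d) t = (fst (const_flow v (x, y) t), snd (const_flow v (x, y) t) + d).
Proof. unfold const_flow; simpl. f_equal; ring. Qed.

Lemma const_flow_steer v p c : 0 < fst p -> 0 < c -> 0 < v * alpha * (c - fst p) ->
  exists t, 0 < t /\ fst (const_flow v p t) = c.
Proof.
  intros Hx Hc Hk. set (x := fst p) in *. set (k := v * alpha) in *.
  exists ((ln c - ln x) / k). split.
  - destruct (Rtotal_order k 0) as [Hn|[Hz|Hp]].
    + assert (ln c < ln x) by (apply ln_increasing; nra). apply Rdiv_neg_neg; lra.
    + rewrite Hz in Hk. lra.
    + assert (ln x < ln c) by (apply ln_increasing; nra). apply Rdiv_lt_0_compat; lra.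
  - apply exp_mul_ln_div; auto. intros Hz. rewrite Hz in Hk. lra.
Qed.

End ConstantControl.

Section Switching.
Variables a alpha beta umin umax : R.

(* A switching schedule is a list of pairs (control value, duration). *)
Fixpoint switch_end (p : pt) (s : list (R * R)) : pt :=
  match s with
  | [] => p
  | (v, t) :: s' => switch_end (const_flow a alpha beta v p t) s'
  end.

Fixpoint switch_duration (s : list (R * R)) : R :=
  match s with
  | [] => 0
  | (_, t) :: s' => t + switch_duration s'
  end.

Fixpoint consecutive_distinct (s : list (R * R)) : Prop :=
  match s with
  | (v, _) :: ((w, _) :: _) as s' => v <> w /\ consecutive_distinct s'
  | _ => True
  end.

Definition feasible_schedule (s : list (R * R)) : Prop :=
  List.Forall (fun vt => umin <= fst vt <= umax /\ 0 < snd vt) s /\ consecutive_distinct s.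

Lemma switch_duration_nonneg s :
  List.Forall (fun vt => umin <= fst vt <= umax /\ 0 < snd vt) s -> 0 <= switch_duration s.
Proof.
  induction 1 as [|[v t] s Hvt _ IH]; simpl in *; lra.
Qed.

(* The first control value is recorded so that the next segment can be glued in front. *)
Lemma switching_traj v t s p : feasible_schedule ((v, t) :: s) ->
  exists u gam, admissible umin umax u /\ is_traj a 0 alpha beta u p gam /\
    u 0 = v /\ gam (switch_duration ((v, t) :: s)) = switch_end p ((v, t) :: s).
Proof.
  revert v t p. induction s as [|[w t'] s IH]; intros v t p [Hs Hd];
    inversion Hs as [|? ? [Hv Ht] Hs']; subst; simpl in Hv, Ht.
  - exists (fun _ => v), (const_flow a alpha beta v p).
    split; [apply const_admissible; exact Hv|split; [apply const_flow_traj|split]].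
    + reflexivity.
    + simpl. rewrite Rplus_0_r. reflexivity.
  - destruct Hd as [Hvw Hd].
    destruct (IH w t' (const_flow a alpha beta v p t) (conj Hs' Hd))
      as [u [gam [Hu [Hgam [Hu0 Hend]]]]].
    exists (concat_ctrl v t u), (concat_path (const_flow a alpha beta v p) gam t).
    split; [|split; [|split]].
    + apply concat_admissible; assumption.
    + apply concat_traj; [exact Ht|rewrite Hu0; auto|apply const_flow_traj|exact Hgam].
    + apply concat_ctrl_before; exact Ht.
    + assert (Hdur := switch_duration_nonneg _ Hs').
      change (concat_path (const_flow a alpha beta v p) gam t
                (t + switch_duration ((w, t') :: s))
              = switch_end (const_flow a alpha beta v p t) ((w, t') :: s)).
      rewrite concat_path_after, <- Hend by lra. f_equal; ring.
Qed.

Lemma switching_orbit v t s p : feasible_schedule ((v, t) :: s) ->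
  orbit_plus a 0 alpha beta umin umax p (switch_end p ((v, t) :: s)).
Proof.
  intros Hfs. destruct (switching_traj v t s p Hfs) as [u [gam [Hu [Hgam [_ Hend]]]]].
  exists u, gam, (switch_duration ((v, t) :: s)).
  split; [exact Hu|split; [exact Hgam|split; [|exact Hend]]].
  apply switch_duration_nonneg, Hfs.
Qed.

End Switching.

Lemma controls_of_both_signs umin umax alpha : umin < 0 < umax -> alpha <> 0 ->
  exists vu vd, umin <= vu <= umax /\ umin <= vd <= umax /\ 0 < vu * alpha /\ vd * alpha < 0.
Proof.
  intros Hu Hal. destruct (Rtotal_order alpha 0) as [Hn|[Hz|Hp]].
  - exists umin, umax. repeat split; try lra; nra.
  - contradiction.
  - exists umax, umin. repeat split; try lra; nra.
Qed.

Lemma pair_of_fst_snd (p : pt) x y : fst p = x -> snd p = y -> p = (x, y).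
Proof. destruct p; simpl; intros -> ->; reflexivity. Qed.

Lemma orbit_plus_inG a alpha beta umin umax p q :
  umin < 0 < umax -> alpha <> 0 -> a <> 0 -> inG p -> inG q ->
  orbit_plus a 0 alpha beta umin umax p q.
Proof.
  intros Hu Hal Ha. destruct p as [x0 y0], q as [x1 y1]. unfold inG; simpl; intros Hx0 Hx1.
  destruct (controls_of_both_signs umin umax alpha Hu Hal) as [vu [vd [Hvu [Hvd [Ku Kd]]]]].
  set (c1 := Rmax x0 1 + 1). set (c2 := Rmin x1 1 / 2).
  assert (Hc1 : x0 < c1 /\ 1 < c1) by (generalize (Rmax_l x0 1) (Rmax_r x0 1); unfold c1; lra).
  assert (Hc2 : 0 < c2 /\ c2 < x1 /\ c2 < 1).
  { generalize (Rmin_l x1 1) (Rmin_r x1 1) (Rmin_pos x1 1 Hx1 Rlt_0_1). unfold c2; lra. }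
  destruct (const_flow_steer a alpha beta vu (x0, y0) c1) as [t1 [Ht1 F1]]; simpl; try lra.
  { apply Rmult_lt_0_compat; lra. }
  set (z1 := snd (const_flow a alpha beta vu (x0, y0) t1)).
  destruct (const_flow_steer a alpha beta vd (c1, z1) c2) as [t3 [Ht3 F3]]; simpl; try lra.
  { nra. }
  set (z3 := snd (const_flow a alpha beta vd (c1, z1) t3)).
  destruct (const_flow_steer a alpha beta vu (c2, z3) x1) as [t5 [Ht5 F5]]; simpl; try lra.
  { apply Rmult_lt_0_compat; lra. }
  set (z5 := snd (const_flow a alpha beta vu (c2, z3) t5)).
  assert (Hspeeds : a * (c1 - 1) * (a * (c2 - 1)) < 0).
  { assert (0 < a * a) by (apply Rsqr_pos_lt; exact Ha).
    assert (0 < (c1 - 1) * (1 - c2)) by (apply Rmult_lt_0_compat; lra). nra. }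
  destruct (positive_combination _ _ (y1 - z5) Hspeeds) as [T1 [T2 [HT1 [HT2 HT]]]].
  replace (x1, y1) with
    (switch_end a alpha beta (x0, y0) [(vu, t1); (0, T1); (vd, t3); (0, T2); (vu, t5)]).
  - apply switching_orbit. split.
    + repeat apply Forall_cons; try apply Forall_nil; simpl; lra.
    + assert (vu <> 0) by (intros E; rewrite E in Ku; lra).
      assert (vd <> 0) by (intros E; rewrite E in Kd; lra).
      simpl; repeat split; congruence.
  - simpl.
    rewrite (pair_of_fst_snd (const_flow a alpha beta vu (x0, y0) t1) c1 z1 F1 eq_refl).
    rewrite const_flow_rest, const_flow_translate.
    rewrite (pair_of_fst_snd (const_flow a alpha beta vd (c1, z1) t3) c2 z3 F3 eq_refl). simpl.
    rewrite const_flow_rest, !const_flow_translate.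
    rewrite (pair_of_fst_snd (const_flow a alpha beta vu (c2, z3) t5) x1 z5 F5 eq_refl). simpl.
    f_equal. lra.
Qed.

Lemma closG_of_mem (S : pt -> Prop) q : inG q -> S q -> closG S q.
Proof.
  intros Hq HS. split; [exact Hq|]. intros eps Heps. exists q.
  rewrite !Rminus_diag, Rabs_R0. split; [exact HS|split; exact Heps].
Qed.

Lemma inG_ctrl_cond a alpha beta umin umax : umin < 0 < umax -> alpha <> 0 -> a <> 0 ->
  ctrl_cond a 0 alpha beta umin umax inG.
Proof.
  intros Hu Hal Ha. split; [|split].
  - auto.
  - intros [x y] Hp. exists (fun _ => 0), (const_flow a alpha beta 0 (x, y)).
    split; [apply const_admissible; lra|split; [apply const_flow_traj|]].
    intros t _. rewrite const_flow_rest. exact Hp.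
  - intros p Hp q Hq. apply closG_of_mem; [exact Hq|]. apply orbit_plus_inG; auto.
Qed.

Lemma control_set_of_whole_group a b alpha beta umin umax :
  ctrl_cond a b alpha beta umin umax inG ->
  control_set a b alpha beta umin umax inG /\
  (forall C, control_set a b alpha beta umin umax C -> forall p, C p <-> inG p).
Proof.
  intros HG. split.
  - split; [exact HG|]. intros D [HD _] _. exact HD.
  - intros C [[HC _] Hmax] p. split; [apply HC|]. apply Hmax; [exact HG|exact HC].
Qed.

Theorem mainTheorem7 (a b alpha beta umin umax : R) :
  umin < 0 < umax ->
  (a, b) <> (0, 0) -> (alpha, beta) <> (0, 0) ->
  b = 0 -> alpha * (a * alpha + b * beta) <> 0 ->
  control_set a b alpha beta umin umax inG /\
  (forall C : pt -> Prop, control_set a b alpha beta umin umax C ->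
     forall p, C p <-> inG p).
Proof.
  intros Hu _ _ -> Hne.
  assert (Hal : alpha <> 0) by (intros E; apply Hne; rewrite E; ring).
  assert (Ha : a <> 0) by (intros E; apply Hne; rewrite E; ring).
  apply control_set_of_whole_group, inG_ctrl_cond; assumption.
Qed.
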